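(* Let $s,t,p\ge 1$, $A,B\in GL(n)$ and $Q\in\mathcal{P}(n)$ with $k=\lambda_1(Q)>1$. If the equation $X^s+A^*X^{-t}A+B^*X^{-p}B=Q$ has a Hermitian positive definite solution, then $$\rho^2(A)<\frac{q^q k^{1+\tilde q}}{(q+1)^{q+1}}\quad\text{and}\quad \rho^2(B)<\frac{q^q k^{1+\tilde q}}{(q+1)^{q+1}},$$ where $q=\min\{t/s,p/s\}$ and $\tilde q=\max\{t/s,p/s\}$.
   Context: $GL(n)$: $n\times n$ complex nonsingular matrices; $\mathcal{P}(n)$: $n\times n$ Hermitian positive definite matrices. For Hermitian $M$, $\lambda_1(M)$ is its largest eigenvalue; $\rho(M)$ is the spectral radius. Real powers of positive definite matrices are defined by functional calculus. *)

(* classical reals. Complex numbers are pairs of reals,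
   n x n complex matrices are functions nat -> nat -> C, only entries
   with indices < n are meaningful (equality is taken on indices < n). *)
From Stdlib Require Import Reals.
Open Scope R_scope.

Definition C : Type := (R * R)%type.
Definition RtoC (x : R) : C := (x, 0).
Definition C0 : C := (0, 0).
Definition C1 : C := (1, 0).
Definition Cadd (z w : C) : C := (fst z + fst w, snd z + snd w).
Definition Cmul (z w : C) : C :=
  (fst z * fst w - snd z * snd w, fst z * snd w + snd z * fst w).
Definition Cconj (z : C) : C := (fst z, - snd z).
Definition Cmod (z : C) : R := sqrt (fst z ^ 2 + snd z ^ 2).

Fixpoint Csum (n : nat) (f : nat -> C) : C :=
  match n with
  | O => C0
  | S m => Cadd (Csum m f) (f m)
  end.

Definition Mat := nat -> nat -> C.
Definition Vec := nat -> C.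

Definition meq (n : nat) (A B : Mat) : Prop :=
  forall i j, (i < n)%nat -> (j < n)%nat -> A i j = B i j.
Definition madd (A B : Mat) : Mat := fun i j => Cadd (A i j) (B i j).
Definition mmul (n : nat) (A B : Mat) : Mat :=
  fun i j => Csum n (fun k => Cmul (A i k) (B k j)).
Definition adj (A : Mat) : Mat := fun i j => Cconj (A j i).
Definition mid : Mat := fun i j => if Nat.eqb i j then C1 else C0.
Definition diagR (d : nat -> R) : Mat :=
  fun i j => if Nat.eqb i j then RtoC (d i) else C0.

Definition mvmul (n : nat) (A : Mat) (v : Vec) : Vec :=
  fun i => Csum n (fun k => Cmul (A i k) (v k)).
Definition vnonzero (n : nat) (v : Vec) : Prop :=
  exists i, (i < n)%nat /\ v i <> C0.
Definition inner (n : nat) (u v : Vec) : C :=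
  Csum n (fun i => Cmul (Cconj (u i)) (v i)).

Definition GL (n : nat) (A : Mat) : Prop :=
  exists Ai, meq n (mmul n A Ai) mid /\ meq n (mmul n Ai A) mid.
Definition Hermitian (n : nat) (A : Mat) : Prop := meq n (adj A) A.
Definition HPD (n : nat) (A : Mat) : Prop :=
  Hermitian n A /\
  forall v, vnonzero n v -> 0 < fst (inner n v (mvmul n A v)).
Definition unitary (n : nat) (U : Mat) : Prop :=
  meq n (mmul n (adj U) U) mid /\ meq n (mmul n U (adj U)) mid.

Definition is_rpow (n : nat) (X : Mat) (r : R) (Y : Mat) : Prop :=
  exists (U : Mat) (d : nat -> R),
    unitary n U /\ (forall i, (i < n)%nat -> 0 < d i) /\
    meq n X (mmul n U (mmul n (diagR d) (adj U))) /\
    meq n Y (mmul n U (mmul n (diagR (fun i => Rpower (d i) r)) (adj U))).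

Definition eigenvalue (n : nat) (A : Mat) (z : C) : Prop :=
  exists v, vnonzero n v /\
    forall i, (i < n)%nat -> mvmul n A v i = Cmul z (v i).

Definition is_lambda1 (n : nat) (Q : Mat) (k : R) : Prop :=
  eigenvalue n Q (RtoC k) /\
  forall x : R, eigenvalue n Q (RtoC x) -> x <= k.

Definition is_spectral_radius (n : nat) (A : Mat) (r : R) : Prop :=
  (exists z, eigenvalue n A z /\ Cmod z = r) /\
  forall z, eigenvalue n A z -> Cmod z <= r.

(* Let A v = z v with v <> 0 and write X = U diag(d) U^* with U
   unitary, so that the powers of X in the equation are U diag(d^r) U^*.
   Taking the quadratic form of the equation at v gives
     v^* Q v = v^* U diag(d^s + |z|^2 d^-t) U^* v + (Bv)^* X^-p (Bv),
   where the last term is > 0 because B is invertible.  Since v^* Q v <= k v^* v,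
   this is impossible once  k <= d^s + |z|^2 d^-t  holds for every eigenvalue
   d > 0 of X.  A weighted AM-GM (Bernoulli) inequality shows that this scalar
   condition holds as soon as |z|^2 >= coef(r) k^(1+r) with r = t/s and
   coef(r) = r^r/(r+1)^(r+1); finally coef is antitone and k^(1+r) is monotone
   in r, so the bound with (q, qt) dominates the one with r.  The case of B is
   symmetric. *)
From Pilot Require Import Defs.
From Stdlib Require Import Reals Lra.
Local Open Scope R_scope.

Lemma Rpower_pos x y : 0 < Rpower x y.
Proof. unfold Rpower; apply exp_pos. Qed.

Lemma Rpower_1_l y : Rpower 1 y = 1.
Proof. unfold Rpower; rewrite ln_1, Rmult_0_r; apply exp_0. Qed.

(* Bernoulli's inequality in the form  (r+1) <= r x + x^-r,  x > 0, r > 0;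
   it follows from  1 + y <= exp y  and  ln x <= x - 1. *)
Lemma Rpower_bernoulli r x : 0 < r -> 0 < x -> r + 1 <= r * x + Rpower x (- r).
Proof.
intros hr hx. unfold Rpower.
assert (hln : ln x <= x - 1).
{ pose proof (exp_ineq1_le (ln x)) as h. rewrite exp_ln in h; lra. }
pose proof (exp_ineq1_le (- r * ln x)).
assert (r * ln x <= r * (x - 1)) by (apply Rmult_le_compat_l; lra).
lra.
Qed.

Definition coef (r : R) : R := Rpower r r / Rpower (r + 1) (r + 1).

Lemma coef_pos r : 0 < coef r.
Proof. apply Rdiv_lt_0_compat; apply Rpower_pos. Qed.

(* The key scalar inequality: for all a > 0,  k <= a + coef(r) k^(1+r) a^-r.
   Substituting  a = k r x / (r+1)  turns it into Bernoulli's inequality. *)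
Lemma young_bound r k a : 0 < r -> 0 < k -> 0 < a ->
  k <= a + coef r * Rpower k (1 + r) * Rpower a (- r).
Proof.
intros hr hk ha.
set (x := a * (r + 1) / (r * k)).
assert (hx : 0 < x) by (unfold x; apply Rdiv_lt_0_compat; nra).
assert (hc : 0 < k / (r + 1)) by (apply Rdiv_lt_0_compat; lra).
assert (ea : a = k / (r + 1) * r * x) by (unfold x; field; lra).
assert (eb : coef r * Rpower k (1 + r) * Rpower a (- r) = k / (r + 1) * Rpower x (- r)).
{ assert (lx : ln x = ln a + ln (r + 1) - ln r - ln k).
  { unfold x, Rdiv.
    rewrite ln_mult, ln_mult, ln_Rinv, ln_mult by (try apply Rinv_0_lt_compat; nra).
    ring. }
  assert (ek : k / (r + 1) = exp (ln k - ln (r + 1))).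
  { unfold Rminus. rewrite exp_plus, exp_Ropp, !exp_ln by lra. reflexivity. }
  rewrite ek. unfold coef, Rpower, Rdiv. rewrite lx, <- !exp_Ropp, <- !exp_plus.
  f_equal. ring. }
rewrite eb.
pose proof (Rpower_bernoulli r x hr hx).
replace k with (k / (r + 1) * (r + 1)) at 1 by (field; lra).
rewrite ea.
replace (k / (r + 1) * r * x + k / (r + 1) * Rpower x (- r)) with
  (k / (r + 1) * (r * x + Rpower x (- r))) by ring.
apply Rmult_le_compat_l; lra.
Qed.

(* coef is antitone on (0, +oo).  With z = r/(r+1) one has
   coef(r) = (1 - z) z^r <= (1 - z) z^q, and the young_bound for q at k = 1,
   a = z gives  (1 - z) z^q <= coef(q). *)
Lemma coef_antitone q r : 0 < q -> q <= r -> coef r <= coef q.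
Proof.
intros hq hqr.
set (z := r / (r + 1)).
assert (hz : 0 < z) by (unfold z; apply Rdiv_lt_0_compat; lra).
assert (hz1 : z < 1).
{ unfold z. apply (Rmult_lt_reg_r (r + 1)); [lra|]. field_simplify; lra. }
assert (hcoef_r : coef r = (1 - z) * Rpower z r).
{ assert (lz : ln z = ln r - ln (r + 1)).
  { unfold z, Rdiv. rewrite ln_mult, ln_Rinv by (try apply Rinv_0_lt_compat; lra). ring. }
  assert (e1z : 1 - z = exp (- ln (r + 1))).
  { rewrite exp_Ropp, exp_ln by lra. unfold z; field; lra. }
  rewrite e1z. unfold coef, Rpower, Rdiv. rewrite lz, <- exp_Ropp, <- !exp_plus.
  f_equal; ring. }
assert (hcoef_q : (1 - z) * Rpower z q <= coef q).
{ pose proof (young_bound q 1 z hq Rlt_0_1 hz) as h.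
  rewrite Rpower_1_l, Rmult_1_r in h.
  assert (hzz : Rpower z (- q) * Rpower z q = 1).
  { rewrite <- Rpower_plus. replace (- q + q) with 0 by ring. apply Rpower_O; lra. }
  pose proof (Rpower_pos z q).
  apply Rmult_le_compat_r with (r := Rpower z q) in h; [|lra].
  rewrite Rmult_plus_distr_r, Rmult_assoc, hzz in h. lra. }
assert (hzpow : Rpower z r <= Rpower z q).
{ replace r with (q + (r - q)) by ring. rewrite Rpower_plus.
  assert (Rpower z (r - q) <= 1).
  { rewrite <- (Rpower_1_l (r - q)). apply Rle_Rpower_l; lra. }
  pose proof (Rpower_pos z q). nra. }
rewrite hcoef_r. apply Rle_trans with ((1 - z) * Rpower z q); [|exact hcoef_q].
apply Rmult_le_compat_l; lra.
Qed.

Lemma threshold_le q r qt k : 0 < q -> q <= r -> r <= qt -> 1 < k ->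
  coef r * Rpower k (1 + r) <= coef q * Rpower k (1 + qt).
Proof.
intros hq hqr hrqt hk.
apply Rmult_le_compat.
- left; apply coef_pos.
- left; apply Rpower_pos.
- apply coef_antitone; lra.
- apply Rle_Rpower; lra.
Qed.

Lemma pointwise_bound s t k q qt L d : 0 < s -> 0 < t -> 0 < q ->
  q <= t / s -> t / s <= qt -> 1 < k -> coef q * Rpower k (1 + qt) <= L ->
  k <= Rpower d s + L * Rpower d (- t).
Proof.
intros hs ht hq hqr hrqt hk hL.
assert (hr : 0 < t / s) by (apply Rdiv_lt_0_compat; lra).
pose proof (young_bound (t / s) k (Rpower d s) hr ltac:(lra) (Rpower_pos d s)) as h.
rewrite Rpower_mult in h. replace (s * - (t / s)) with (- t) in h by (field; lra).
pose proof (threshold_le q (t / s) qt k hq hqr hrqt hk).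
pose proof (Rpower_pos d (- t)).
assert (coef (t / s) * Rpower k (1 + t / s) * Rpower d (- t) <= L * Rpower d (- t))
  by (apply Rmult_le_compat_r; lra).
lra.
Qed.

From mathcomp Require Import all_boot all_order all_algebra.
From mathcomp Require Import Rstruct.
From mathcomp.real_closed Require Import complex.
From mathcomp Require Import spectral sesquilinear ring.
Import GRing.Theory Num.Theory Order.TTheory.
Local Open Scope ring_scope.
Local Open Scope complex_scope.
Local Open Scope sesquilinear_scope.
Set Implicit Arguments.
Unset Strict Implicit.
Unset Printing Implicit Defensive.

Notation CR := (Rdefinitions.R)[i].

Section SpectralForms.
Variable n : nat.
Implicit Types (M N Q U : 'M[CR]_n) (v w : 'cV[CR]_n).

Definition qform M v : CR := (v^t* *m M *m v) 0 0.

Lemma qformD M N v : qform (M + N) v = qform M v + qform N v.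
Proof. by rewrite /qform mulmxDr mulmxDl mxE. Qed.

Lemma qformZ a M v : qform (a *: M) v = a * qform M v.
Proof. by rewrite /qform -scalemxAr -scalemxAl mxE. Qed.

Lemma qform_conj M N v : qform (M^t* *m (N *m M)) v = qform N (M *m v).
Proof. by rewrite /qform trmx_mul map_mxM !mulmxA. Qed.

Lemma qform_scalev a M v : qform M (a *: v) = `|a| ^+ 2 * qform M v.
Proof.
rewrite /qform normCK.
have -> : (a *: v)^t* = a^* *: v^t* by apply/matrixP => i j; rewrite !mxE rmorphM.
by rewrite -scalemxAr -!scalemxAl !mxE mulrA mulrC (mulrC a).
Qed.

(* A square matrix with orthonormal rows also has orthonormal columns. *)
Lemma unitarymx_adjK U : U \is unitarymx -> U^t* *m U = 1%:M.
Proof. by move=> hU; rewrite -invmx_unitary // mulVmx // unitarymx_unit. Qed.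

Definition dg (d : nat -> R) : 'M[CR]_n := diag_mx (\row_(i < n) (d i)%:C).
Definition spec U (d : nat -> R) : 'M[CR]_n := U *m (dg d *m U^t*).

Lemma qform_spec U d v :
  qform (spec U d) v = \sum_(i < n) (d i)%:C * `|(U^t* *m v) i 0| ^+ 2.
Proof.
rewrite /qform /spec; set y := U^t* *m v.
have hy : v^t* *m U = y^t* by rewrite /y trmx_mul map_mxM trmxCK.
rewrite !mulmxA hy -!mulmxA mulmxA !mxE; apply: eq_bigr => j _.
by rewrite mul_mx_diag !mxE normCK; ring.
Qed.

Lemma spec_const U (c : R) : U \is unitarymx -> spec U (fun=> c) = c%:C *: 1%:M.
Proof.
move=> /unitarymxP hU; rewrite /spec /dg.
have -> : \row_(i < n) c%:C = const_mx c%:C by apply/rowP => i; rewrite !mxE.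
by rewrite diag_const_mx mul_scalar_mx -scalemxAr hU.
Qed.

Lemma spec_lincomb U (d e : nat -> R) (a : R) :
  spec U d + a%:C *: spec U e = spec U (fun i => d i + a * e i).
Proof.
rewrite /spec scalemxAr scalemxAl -mulmxDr -mulmxDl; congr (_ *m (_ *m _)).
apply/matrixP => i j; rewrite !mxE.
by case: (i == j); rewrite ?mulr1n ?mulr0n ?mulr0 ?addr0 // rmorphD rmorphM.
Qed.

Lemma spec_monotone U (d e : nat -> R) v : (forall i : 'I_n, d i <= e i) ->
  qform (spec U d) v <= qform (spec U e) v.
Proof.
move=> hde; rewrite !qform_spec; apply: ler_sum => i _.
by apply: ler_wpM2r; [exact: exprn_ge0 | rewrite lecR].
Qed.

Lemma spec_lower U (d : nat -> R) (c : R) v : U \is unitarymx ->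
  (forall i : 'I_n, c <= d i) -> c%:C * qform 1%:M v <= qform (spec U d) v.
Proof. by move=> hU hc; rewrite -qformZ -(spec_const c hU); exact: spec_monotone. Qed.

Lemma spec_posdef U (d : nat -> R) v : U \is unitarymx ->
  (forall i : 'I_n, 0 < d i) -> v != 0 -> 0 < qform (spec U d) v.
Proof.
move=> hU hd v0; rewrite qform_spec.
have y0 : U^t* *m v != 0.
  apply: contraNneq v0 => y0.
  by rewrite -(mul1mx v) -(unitarymxP hU) -mulmxA y0 mulmx0.
have [i [j yi0]] := matrix0Pn _ y0; rewrite (ord1 j) in yi0.
rewrite (bigD1 i) //=; apply: ltr_pwDl.
  by apply: mulr_gt0; [rewrite ltcR | rewrite exprn_gt0 // normr_gt0].
by apply: sumr_ge0 => l _; apply: mulr_ge0; [rewrite lecR ltW | exact: exprn_ge0].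
Qed.

(* A matrix intertwining two real diagonal matrices intertwines any function
   of them (it only links equal diagonal entries). *)
Lemma dg_intertwine (W : 'M[CR]_n) (d1 d2 : nat -> R) (f : R -> R) :
  W *m dg d1 = dg d2 *m W -> W *m dg (f \o d1) = dg (f \o d2) *m W.
Proof.
move/matrixP=> hW; apply/matrixP => i j; move: (hW i j).
rewrite /dg !mul_mx_diag !mul_diag_mx !mxE /=.
case: (eqVneq (W i j) 0) => [-> _|nz]; first by rewrite mul0r mulr0.
by rewrite mulrC => /(mulIf nz) [->]; rewrite mulrC.
Qed.

Lemma spec_fun_unique U1 U2 (d1 d2 : nat -> R) (f : R -> R) :
  U1 \is unitarymx -> U2 \is unitarymx ->
  spec U1 d1 = spec U2 d2 -> spec U1 (f \o d1) = spec U2 (f \o d2).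
Proof.
move=> hU1 hU2 eqX.
set W := U2^t* *m U1.
have intertwine : W *m dg d1 = dg d2 *m W.
  have := congr1 (fun M => U2^t* *m M *m U1) eqX; rewrite /spec.
  rewrite !mulmxA unitarymx_adjK // mul1mx -!mulmxA unitarymx_adjK // mulmx1 => ->.
  by rewrite !mulmxA.
rewrite /spec {1}(_ : U1 = U2 *m W); last by rewrite /W mulmxA (unitarymxP hU2) mul1mx.
rewrite -mulmxA (mulmxA W) (dg_intertwine f intertwine) -mulmxA.
by congr (_ *m (_ *m _)); rewrite /W -mulmxA (unitarymxP hU1) mulmx1.
Qed.

Lemma hermitian_spec Q : Q^t* = Q ->
  exists U (d : nat -> R), U \is unitarymx /\ Q = spec U d.
Proof.
move=> hQ.
have Qherm : Q \is hermsymmx by apply/is_hermitianmxP; rewrite expr0 scale1r hQ.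
set P := spectralmx Q; set sp := spectral_diag Q.
have PU : P \is unitarymx := spectral_unitarymx Q.
have QE : Q = P^t* *m diag_mx sp *m P.
  by rewrite -invmx_unitary //; exact/orthomx_spectralP/hermitian_normalmx.
have sp_real : forall i, exists x : R, sp 0 i = x%:C.
  by move=> i; apply/complex_realP; move/mxOverP: (hermitian_spectral_diag_real Qherm).
pose d (j : nat) : R := oapp (fun i => complex.Re (sp 0 i)) 0 (insub j : option 'I_n).
exists (P^t*), d; split; first by apply/unitarymxP; rewrite trmxCK unitarymx_adjK.
rewrite QE /spec trmxCK mulmxA; congr (_ *m _ *m _); congr diag_mx.
by apply/rowP => i; rewrite mxE /d valK /=; have [x ->] := sp_real i.
Qed.

Lemma spec_eigvec U (d : nat -> R) (i : 'I_n) : U \is unitarymx ->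
  exists2 w : 'cV[CR]_n, w != 0 & spec U d *m w = (d i)%:C *: w.
Proof.
move=> hU; exists (U *m (delta_mx i 0 : 'cV_n)).
  apply/negP => /eqP w0; have := congr1 (mulmx (U^t*)) w0.
  rewrite mulmxA unitarymx_adjK // mul1mx mulmx0 => /matrixP/(_ i 0).
  by rewrite !mxE !eqxx /= => /eqP; rewrite oner_eq0.
rewrite /spec -!mulmxA (mulmxA (U^t*)) unitarymx_adjK // mul1mx scalemxAr.
congr (_ *m _); apply/matrixP => a b; rewrite mul_diag_mx !mxE.
by case: (eqVneq a i) => [->|ne]; rewrite ?mulr1 ?mulr0 //= ?mulr0n ?mulr0.
Qed.

Lemma rayleigh_upper Q (k : R) v : Q^t* = Q ->
  (forall (x : R) w, w != 0 -> Q *m w = x%:C *: w -> x <= k) ->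
  qform Q v <= k%:C * qform 1%:M v.
Proof.
move=> hQ hk; have [U [d [hU QE]]] := hermitian_spec hQ; rewrite QE in hk *.
rewrite -qformZ -(spec_const k hU); apply: spec_monotone => i.
by have [w w0 weig] := spec_eigvec d i hU; exact: hk _ _ w0 weig.
Qed.

Lemma no_large_eigenvalue Q A B Xs Xt Xp (k L : R) (z : CR) v :
  Xs + (A^t* *m (Xt *m A) + B^t* *m (Xp *m B)) = Q ->
  (forall w, qform Q w <= k%:C * qform 1%:M w) ->
  (forall w, k%:C * qform 1%:M w <= qform (Xs + L%:C *: Xt) w) ->
  (forall w, w != 0 -> 0 < qform Xp w) ->
  (forall w, w != 0 -> B *m w != 0) ->
  v != 0 -> A *m v = z *: v -> `|z| ^+ 2 = L%:C -> False.
Proof.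
move=> hQ Qle Xge Xp_pos B_inj v0 Av hz.
have split_Q : qform Q v = qform (Xs + L%:C *: Xt) v + qform Xp (B *m v).
  by rewrite -hQ !qformD !qform_conj Av qform_scalev hz qformZ addrA.
have : k%:C * qform 1%:M v < qform Q v.
  rewrite split_Q addrC; apply: le_lt_trans (Xge v) _.
  exact: ltr_pwDl (Xp_pos _ (B_inj _ v0)) (lexx _).
by move=> /lt_le_trans/(_ (Qle v)); rewrite ltxx.
Qed.

End SpectralForms.

Definition toC (z : Defs.C) : CR := Complex (fst z) (snd z).
Definition ofC (z : CR) : Defs.C := (complex.Re z, complex.Im z).

Lemma toCK z : ofC (toC z) = z. Proof. by case: z. Qed.
Lemma ofCK z : toC (ofC z) = z. Proof. by case: z. Qed.

Lemma toC_inj z w : toC z = toC w -> z = w.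
Proof. by move=> h; rewrite -(toCK z) h toCK. Qed.

Lemma toC_mul z w : toC (Cmul z w) = toC z * toC w.
Proof. by case: z; case: w => a b c d; rewrite /toC /Cmul /=; congr Complex. Qed.

Lemma toC_sum n f : toC (Csum n f) = \sum_(i < n) toC (f i).
Proof.
elim: n => [|n IH]; first by rewrite big_ord0.
by rewrite big_ord_recr /= -IH.
Qed.

Lemma Cmod_normC z : `|toC z| ^+ 2 = (pow (Cmod z) 2)%:C.
Proof.
rewrite normCK /Cmod pow2_sqrt; last by apply: Rplus_le_le_0_compat; apply: pow2_ge_0.
case: z => a b; apply/eqP; rewrite eq_complex /= !RplusE !RmultE R1E.
by apply/andP; split; apply/eqP; ring.
Qed.

Definition toM n (M : Mat) : 'M[CR]_n := \matrix_(i, j) toC (M i j).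
Definition toV n (v : Vec) : 'cV[CR]_n := \col_i toC (v i).

Lemma toM_mul n A B : toM n (mmul n A B) = toM n A *m toM n B.
Proof.
apply/matrixP => i j; rewrite !mxE /mmul toC_sum.
by apply: eq_bigr => k _; rewrite toC_mul !mxE.
Qed.

Lemma toM_add n A B : toM n (madd A B) = toM n A + toM n B.
Proof. by apply/matrixP => i j; rewrite !mxE. Qed.

Lemma toM_adj n A : toM n (adj A) = (toM n A)^t*.
Proof. by apply/matrixP => i j; rewrite !mxE. Qed.

Lemma toM_diagR n d : toM n (diagR d) = dg n d.
Proof.
apply/matrixP => i j; rewrite !mxE /diagR.
case: (eqVneq i j) => [->|ne]; first by rewrite Nat.eqb_refl.
suff -> : Nat.eqb i j = false by [].
by apply/Nat.eqb_neq => e; move/eqP: ne; apply; apply/val_inj.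
Qed.

Lemma toM_id n : toM n mid = 1%:M.
Proof.
have -> : mid = diagR (fun=> 1%R) by [].
by rewrite toM_diagR /dg; apply/matrixP => i j; rewrite !mxE.
Qed.

Lemma meq_toM n A B : meq n A B <-> toM n A = toM n B.
Proof.
split=> [h|h i j /ssrnat.ltP hi /ssrnat.ltP hj].
  by apply/matrixP => i j; rewrite !mxE h //; apply/ssrnat.ltP.
by apply: toC_inj; move/matrixP: h => /(_ (Ordinal hi) (Ordinal hj)); rewrite !mxE.
Qed.

Lemma toV_mvmul n A v : toV n (mvmul n A v) = toM n A *m toV n v.
Proof.
apply/matrixP => i j; rewrite !mxE /mvmul toC_sum.
by apply: eq_bigr => k _; rewrite toC_mul !mxE.
Qed.

Lemma vnonzero_toV n v : vnonzero n v <-> toV n v != 0.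
Proof.
split=> [[i [/ssrnat.ltP hi nz]]|/matrix0Pn [i [j]]].
  apply/negP => /eqP/matrixP/(_ (Ordinal hi) 0); rewrite !mxE => h.
  by apply: nz; apply: toC_inj; rewrite h.
rewrite mxE => vi0; exists i; split; first exact/ssrnat.ltP.
by move=> vi; move: vi0; rewrite vi eqxx.
Qed.

Definition ofV n (w : 'cV[CR]_n) : Vec :=
  fun i => oapp (fun j => ofC (w j 0)) Defs.C0 (insub i : option 'I_n).

Lemma ofVK n (w : 'cV[CR]_n) : toV n (ofV w) = w.
Proof. by apply/matrixP => i j; rewrite !mxE ord1 /ofV valK ofCK. Qed.

Lemma eigenvalue_toM n A z : Defs.eigenvalue n A z <->
  exists2 v : 'cV[CR]_n, v != 0 & toM n A *m v = toC z *: v.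
Proof.
split=> [[v [/vnonzero_toV v0 Av]]|[w w0 Aw]].
  exists (toV n v) => //; rewrite -toV_mvmul; apply/matrixP => i j.
  by rewrite !mxE Av ?toC_mul //; apply/ssrnat.ltP.
exists (ofV w); split; first by apply/vnonzero_toV; rewrite ofVK.
move=> i /ssrnat.ltP hi; apply: toC_inj; rewrite toC_mul.
move/matrixP: (toV_mvmul n A (ofV w)) => /(_ (Ordinal hi) 0).
by rewrite ofVK Aw !mxE /ofV insubT /= ofCK.
Qed.

Lemma GL_injective n B : GL n B ->
  forall w : 'cV[CR]_n, w != 0 -> toM n B *m w != 0.
Proof.
move=> [Bi [_ /meq_toM]]; rewrite toM_mul toM_id => BiB w; apply: contraNneq => Bw0.
by rewrite -(mul1mx w) -BiB -mulmxA Bw0 mulmx0.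
Qed.

Lemma lambda1_eigen_bound n Q k : is_lambda1 n Q k ->
  forall (x : R) (w : 'cV[CR]_n), w != 0 -> toM n Q *m w = x%:C *: w -> x <= k.
Proof. by move=> [_ hk] x w w0 Qw; apply/RleP/hk/eigenvalue_toM; exists w. Qed.

Lemma unitary_toM n U : unitary n U -> toM n U \is unitarymx.
Proof. by move=> [_ /meq_toM]; rewrite toM_mul toM_adj toM_id => /unitarymxP. Qed.

Lemma rpow_spec n X r Y : is_rpow n X r Y ->
  exists U (d : nat -> R), U \is unitarymx /\
    toM n X = spec U d /\ toM n Y = spec U (fun i => Rpower (d i) r).
Proof.
move=> [U [d [/unitary_toM hU [_ [/meq_toM hX /meq_toM hY]]]]].
exists (toM n U), d; split=> //.
by move: hX hY; rewrite !toM_mul !toM_diagR toM_adj.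
Qed.

Local Open Scope R_scope.

(* Otherwise the scalar
   bound makes  Xs + |z|^2 Xt >= k, contradicting no_large_eigenvalue. *)
Lemma eigenvalue_bound n (s t p k q qt : R) (A B Q X Xs Xt Xp : Mat) (z : Defs.C) :
  0 < s -> 0 < t -> GL n B -> Defs.Hermitian n Q -> is_lambda1 n Q k -> 1 < k ->
  is_rpow n X s Xs -> is_rpow n X (- t) Xt -> is_rpow n X (- p) Xp ->
  (toM n Xs + ((toM n A)^t* *m (toM n Xt *m toM n A)
               + (toM n B)^t* *m (toM n Xp *m toM n B)) = toM n Q)%R ->
  0 < q -> q <= t / s -> t / s <= qt -> Defs.eigenvalue n A z ->
  Cmod z ^ 2 < coef q * Rpower k (1 + qt).
Proof.
move=> s0 t0 hB hQ hk k1 hXs hXt hXp hE q0 hq hqt /eigenvalue_toM [v v0 Av].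
case: (Rlt_or_le (Cmod z ^ 2) (coef q * Rpower k (1 + qt))) => // large; exfalso.
have [U [d [hU [XU XsU]]]] := rpow_spec hXs.
have [U2 [d2 [hU2 [XU2 XtU2]]]] := rpow_spec hXt.
have [U3 [d3 [hU3 [_ XpU3]]]] := rpow_spec hXp.
have XtU : toM n Xt = spec U (fun i => Rpower (d i) (- t)).
  rewrite XtU2; symmetry; apply: (spec_fun_unique (fun x => Rpower x (- t)) hU hU2).
  by rewrite -XU.
apply: (no_large_eigenvalue hE _ _ _ (GL_injective hB) v0 Av (Cmod_normC z)) => w.
- apply: rayleigh_upper; last exact: lambda1_eigen_bound hk.
  by move/meq_toM: hQ; rewrite toM_adj.
- rewrite XsU XtU spec_lincomb; apply: spec_lower => // i.
  by apply/RleP; apply: (pointwise_bound _ _ _ _ _ _ _ s0 t0 q0 hq hqt k1 large).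
- by move=> w0; rewrite XpU3; apply: spec_posdef => // i; apply/RltP/Rpower_pos.
Qed.

Theorem mainTheorem3 (n : nat) (s t p k : R) (A B Q : Mat) :
  1 <= s -> 1 <= t -> 1 <= p ->
  GL n A -> GL n B -> HPD n Q ->
  is_lambda1 n Q k -> 1 < k ->
  (exists X Xs Xt Xp : Mat,
      HPD n X /\ is_rpow n X s Xs /\ is_rpow n X (- t) Xt /\
      is_rpow n X (- p) Xp /\
      meq n (madd Xs (madd (mmul n (adj A) (mmul n Xt A))
                           (mmul n (adj B) (mmul n Xp B)))) Q) ->
  forall rA rB : R,
    is_spectral_radius n A rA -> is_spectral_radius n B rB ->
    let q := Rmin (t / s) (p / s) in
    let qt := Rmax (t / s) (p / s) in
    rA ^ 2 < Rpower q q * Rpower k (1 + qt) / Rpower (q + 1) (q + 1) /\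
    rB ^ 2 < Rpower q q * Rpower k (1 + qt) / Rpower (q + 1) (q + 1).
Proof.
move=> s1 t1 p1 hA hB [hQ _] hk k1 [X [Xs [Xt [Xp [_ [hXs [hXt [hXp /meq_toM hE]]]]]]]].
move=> rA rB [[zA [hzA <-]] _] [[zB [hzB <-]] _] q qt.
move: hE; rewrite !toM_add !toM_mul !toM_adj => hE.
have q0 : 0 < q by apply: Rmin_glb_lt; apply: Rdiv_lt_0_compat; lra.
have -> : Rpower q q * Rpower k (1 + qt) / Rpower (q + 1) (q + 1) = coef q * Rpower k (1 + qt).
  by rewrite /coef /Rdiv !Rmult_assoc (Rmult_comm (Rpower k _)).
split.
- apply: (eigenvalue_bound _ _ hB hQ hk k1 hXs hXt hXp hE q0 _ _ hzA);
    [lra | lra | exact: Rmin_l | exact: Rmax_l].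
- (* the equation is symmetric in (A, t) and (B, p) *)
  apply: (eigenvalue_bound _ _ hA hQ hk k1 hXs hXp hXt _ q0 _ _ hzB);
    [lra | lra | by rewrite (addrC (_^t* *m _)) | exact: Rmin_r | exact: Rmax_r].
Qed.
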